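(* Let $\mathbf{X}=(X_1,X_2)$ and $\mathbf{Y}=(Y_1,Y_2)$ be jointly distributed random variables (the ''past'' and ''future'' states of a bivariate Markovian process). Let $\mathcal{A}$ and the product lattice $(\mathcal{A}\times\mathcal{A},\preceq)$ be as described in the context, and fix a single-target redundancy function $\texttt{Red}$. Suppose $I_\cap$ and $I'_\cap$ are two double-redundancy functions on $\mathcal{A}\times\mathcal{A}$ that both satisfy Axiom 1 (compatibility, with respect to this same $\texttt{Red}$) and Axiom 2 (partial ordering), and let $I_\partial$, $I'_\partial$ be their respective atoms defined via Möbius inversion. If $I_\partial^{\{\{1\},\{2\}\}\to\{\{1\},\{2\}\}} = I'^{\{\{1\},\{2\}\}\to\{\{1\},\{2\}\}}_\partial$, then $I_\partial^{\boldsymbol\alpha\to\boldsymbol\beta}=I'^{\boldsymbol\alpha\to\boldsymbol\beta}_\partial$ for all 16 nodes $\boldsymbol\alpha\to\boldsymbol\beta\in\mathcal{A}\times\mathcal{A}$. That is, Axioms 1 and 2 provide unique values for the 16 atoms once one specifies (i) a single-target redundancy function $\texttt{Red}$ and (ii) the value of the atom $I_\partial^{\{\{1\},\{2\}\}\to\{\{1\},\{2\}\}}$.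
   Context: $\mathcal{A}$ is the set of antichains of nonempty subsets of $\{1,2\}$: $\mathcal{A}=\{\{\{1\}\},\{\{2\}\},\{\{1,2\}\},\{\{1\},\{2\}\}\}$. For $\boldsymbol\alpha,\boldsymbol\beta\in\mathcal{A}$, $\boldsymbol\alpha\preceq\boldsymbol\beta$ iff for every $b\in\boldsymbol\beta$ there is $a\in\boldsymbol\alpha$ with $a\subseteq b$. Elements of $\mathcal{A}\times\mathcal{A}$ are written $\boldsymbol\alpha\to\boldsymbol\beta$, ordered by $\boldsymbol\alpha\to\boldsymbol\beta\preceq\boldsymbol\alpha'\to\boldsymbol\beta'$ iff $\boldsymbol\alpha\preceq\boldsymbol\alpha'$ and $\boldsymbol\beta\preceq\boldsymbol\beta'$ (16 nodes). For a subset $a=\{i_1,\dots,i_k\}\subseteq\{1,2\}$ write $\mathbf{X}^a=(X_{i_1},\dots,X_{i_k})$, similarly $\mathbf{Y}^a$. A single-target redundancy function $\texttt{Red}(Z_1,\dots,Z_J;T)$ assigns a real number to any finite collection of source random vectors $Z_1,\dots,Z_J$ and a target random vector $T$ (the partial-information-decomposition redundancy). A double-redundancy function assigns a real number $I_\cap^{\boldsymbol\alpha\to\boldsymbol\beta}$ to each node. Axiom 1 (compatibility): for $\boldsymbol\alpha=\{\alpha_1,\dots,\alpha_J\}$, $\boldsymbol\beta=\{\beta_1,\dots,\beta_K\}$: if $J=K=1$ then $I_\cap^{\boldsymbol\alpha\to\boldsymbol\beta}=I(\mathbf{X}^{\alpha_1};\mathbf{Y}^{\beta_1})$ (Shannon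 mutual information); if $K=1$ then $I_\cap^{\boldsymbol\alpha\to\boldsymbol\beta}=\texttt{Red}(\mathbf{X}^{\alpha_1},\dots,\mathbf{X}^{\alpha_J};\mathbf{Y}^{\beta_1})$; if $J=1$ then $I_\cap^{\boldsymbol\alpha\to\boldsymbol\beta}=\texttt{Red}(\mathbf{Y}^{\beta_1},\dots,\mathbf{Y}^{\beta_K};\mathbf{X}^{\alpha_1})$. Axiom 2 (partial ordering): if $\boldsymbol\alpha\to\boldsymbol\beta\preceq\boldsymbol\alpha'\to\boldsymbol\beta'$ then $I_\cap^{\boldsymbol\alpha\to\boldsymbol\beta}\le I_\cap^{\boldsymbol\alpha'\to\boldsymbol\beta'}$. The atoms $I_\partial^{\boldsymbol\alpha\to\boldsymbol\beta}$ are the unique numbers satisfying $I_\cap^{\boldsymbol\alpha\to\boldsymbol\beta}=\sum_{\boldsymbol\alpha'\to\boldsymbol\beta'\preceq\boldsymbol\alpha\to\boldsymbol\beta}I_\partial^{\boldsymbol\alpha'\to\boldsymbol\beta'}$ for all nodes, equivalently $I_\partial^{\boldsymbol\alpha\to\boldsymbol\beta}=I_\cap^{\boldsymbol\alpha\to\boldsymbol\beta}-\sum_{\boldsymbol\alpha'\to\boldsymbol\beta'\prec\boldsymbol\alpha\to\boldsymbol\beta}I_\partial^{\boldsymbol\alpha'\to\boldsymbol\beta'}$. *)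

From mathcomp Require Import all_boot all_order all_algebra.
From mathcomp Require Import reals exp.
Set Implicit Arguments. Unset Strict Implicit. Unset Printing Implicit Defensive.
Import Order.TTheory GRing.Theory Num.Theory.
Local Open Scope ring_scope.

(* The index set {1,2} is modelled as 'I_2 : index 1 ~ i1, index 2 ~ i2. *)
Definition i1 : 'I_2 := ord0.
Definition i2 : 'I_2 := ord_max.

(* Antichains of nonempty subsets of {1,2}; the set A consists of the
   nonempty ones (exactly the four listed in the paper). *)
Definition isA (al : {set {set 'I_2}}) : bool :=
  [&& al != set0, set0 \notin al &
      [forall a in al, forall b in al, (a \subset b) ==> (a == b)]].

Definition precA (al be : {set {set 'I_2}}) : bool :=
  [forall b in be, [exists a in al, a \subset b]].

Definition precN (n n' : {set {set 'I_2}} * {set {set 'I_2}}) : bool :=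
  precA n.1 n'.1 && precA n.2 n'.2.

Definition isNode (n : {set {set 'I_2}} * {set {set 'I_2}}) : bool :=
  isA n.1 && isA n.2.

Definition bot2 : {set {set 'I_2}} := [set [set i1]; [set i2]].

(* Discrete random variables on a finite sample space Omega with pmf P.
   A random vector is a finite list of random variables (with values in a
   common eqType V); its value at w is the list of the values. *)
Definition rvec (Omega : finType) (V : eqType) := seq (Omega -> V).

Definition rval (Omega : finType) (V : eqType) (Z : rvec Omega V) (w : Omega)
  : seq V := [seq f w | f <- Z].

Definition subvec (Omega : finType) (V : eqType) (X : 'I_2 -> Omega -> V)
  (a : {set 'I_2}) : rvec Omega V := [seq X i | i <- enum a].

Definition prob (R : realType) (Omega : finType) (P : Omega -> R)
  (T : eqType) (A : Omega -> T) (x : T) : R :=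
  \sum_(w | A w == x) P w.

Definition mutinfo (R : realType) (Omega : finType) (P : Omega -> R)
  (V : eqType) (A B : rvec Omega V) : R :=
  \sum_(w : Omega)
     P w * ln (prob P (fun u => (rval A u, rval B u)) (rval A w, rval B w)
               / (prob P (rval A) (rval A w) * prob P (rval B) (rval B w))).

Definition compatible (R : realType) (Omega : finType) (P : Omega -> R)
  (V : eqType) (X Y : 'I_2 -> Omega -> V)
  (Red : seq (rvec Omega V) -> rvec Omega V -> R)
  (Icap : {set {set 'I_2}} -> {set {set 'I_2}} -> R) : Prop :=
  [/\ (forall a b, isA [set a] -> isA [set b] ->
         Icap [set a] [set b] = mutinfo P (subvec X a) (subvec Y b)),
      (forall al b, isA al -> isA [set b] ->
         Icap al [set b] = Red [seq subvec X a | a <- enum al] (subvec Y b)) &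
      (forall a be, isA [set a] -> isA be ->
         Icap [set a] be = Red [seq subvec Y b | b <- enum be] (subvec X a))].

Definition monotone (R : realType)
  (Icap : {set {set 'I_2}} -> {set {set 'I_2}} -> R) : Prop :=
  forall n n', isNode n -> isNode n' -> precN n n' ->
    Icap n.1 n.2 <= Icap n'.1 n'.2.

Definition atoms_of (R : realType)
  (Icap Ipart : {set {set 'I_2}} -> {set {set 'I_2}} -> R) : Prop :=
  forall n, isNode n ->
    Icap n.1 n.2 = \sum_(m | isNode m && precN m n) Ipart m.1 m.2.

From mathcomp Require Import all_boot all_order all_algebra.
From mathcomp Require Import reals exp.
Set Implicit Arguments. Unset Strict Implicit.
Import GRing.Theory.
Local Open Scope ring_scope.

(* Every node other than {{1},{2}} -> {{1},{2}} has a singleton antichain on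
   at least one side, so Axiom 1 expresses the double redundancy there through
   Red and mutual information alone: the two double-redundancy functions agree
   off the bottom node.  Atoms are recovered from these cumulative values by
   Moebius inversion, so an induction along the order shows that the two atom
   families, which also agree at the bottom node, coincide. *)

Section MoebiusUniqueness.

Variables (R : zmodType) (T : finType) (D : pred T) (le : rel T).
Hypotheses (le_refl : {in D, reflexive le})
           (le_anti : {in D &, antisymmetric le})
           (le_trans : {in D & &, transitive le}).

Let down n := [set m | D m && le m n].

Lemma down_proper m n : D m -> D n -> le m n -> m != n -> down m \proper down n.
Proof.
move=> Dm Dn le_mn ne_mn; apply/properP; split.
  apply/subsetP => k; rewrite !inE => /andP[Dk le_km].
  by rewrite Dk (@le_trans m k n Dm Dk Dn le_km le_mn).
exists n; first by rewrite inE Dn le_refl.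
rewrite inE Dn /=; apply: contra ne_mn => le_nm.
by apply/eqP/le_anti; rewrite ?le_mn.
Qed.

Lemma eq_atoms_of_eq_cumulative_off (f g : T -> R) (n0 : T) :
  f n0 = g n0 ->
  (forall n, D n -> n != n0 ->
     \sum_(m | D m && le m n) f m = \sum_(m | D m && le m n) g m) ->
  {in D, f =1 g}.
Proof.
move=> eq_n0 eq_cumul n; move: {2}#|down n|.+1 (ltnSn #|down n|) => k.
elim: k n => [//|k IH] n lt_down_k Dn.
have [-> //|ne_n0] := eqVneq n n0.
have nn : D n && le n n by apply/andP; split; [exact: Dn | exact: le_refl].
have := eq_cumul n Dn ne_n0; rewrite !(bigD1 n nn) /=.
rewrite (eq_bigr g); first exact: addIr.
move=> m /andP[/andP[Dm le_mn] ne_mn]; apply: IH (Dm).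
exact: leq_trans (proper_card (down_proper Dm Dn le_mn ne_mn)) (ltnSE lt_down_k).
Qed.

End MoebiusUniqueness.

Lemma I2_cases (i : 'I_2) : i = i1 \/ i = i2.
Proof. by case: i => [[|[|//]] lt_i2]; [left | right]; apply: val_inj. Qed.

Lemma subset_I2_cases (s : {set 'I_2}) :
  [\/ s = set0, s = [set i1], s = [set i2] | s = setT].
Proof.
case s1: (i1 \in s); case s2: (i2 \in s);
  [apply: Or44 | apply: Or42 | apply: Or43 | apply: Or41];
  by apply/setP => i; case: (I2_cases i) => ->; rewrite !inE ?s1 ?s2.
Qed.

Lemma isA_antichain al :
  isA al -> {in al &, forall a b : {set 'I_2}, a \subset b -> a = b}.
Proof.
case/and3P => _ _ /forall_inP antichain a b al_a al_b.
by move/forall_inP: (antichain a al_a) => /(_ b al_b) /implyP sub_eq /sub_eq /eqP.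
Qed.

Lemma isA_cases al : isA al -> al = bot2 \/ exists a, al = [set a].
Proof.
move=> al_A; have eq_of_sub := isA_antichain al_A.
case/and3P: al_A => al_n0 set0_nin _.
have [al_T | al_nT] := boolP (setT \in al).
  right; exists setT; apply/setP => a; rewrite inE.
  by apply/idP/eqP => [al_a | ->]; first exact: eq_of_sub (subsetT a).
have singletons a : a \in al -> a = [set i1] \/ a = [set i2].
  case: (subset_I2_cases a) => -> al_a; [by rewrite al_a in set0_nin | by left | by right |].
  by rewrite al_a in al_nT.
have [al_1 | al_n1] := boolP ([set i1] \in al);
  have [al_2 | al_n2] := boolP ([set i2] \in al).
- left; apply/setP => a; rewrite !inE.
  by apply/idP/orP => [/singletons[]-> | []/eqP->]; [left | right | |].
- right; exists [set i1]; apply/setP => a; rewrite inE.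
  apply/idP/eqP => [al_a | -> //]; case: (singletons a al_a) => // a_2.
  by rewrite -a_2 al_a in al_n2.
- right; exists [set i2]; apply/setP => a; rewrite inE.
  apply/idP/eqP => [al_a | -> //]; case: (singletons a al_a) => // a_1.
  by rewrite -a_1 al_a in al_n1.
- case/set0Pn: al_n0 => a al_a.
  by case: (singletons a al_a) => a_E; rewrite -a_E al_a in al_n1 al_n2.
Qed.

Lemma precA_refl : reflexive precA.
Proof. by move=> al; apply/forall_inP => b al_b; apply/exists_inP; exists b. Qed.

Lemma precA_trans : transitive precA.
Proof.
move=> be al ga /forall_inP al_be /forall_inP be_ga; apply/forall_inP => c ga_c.
have /exists_inP[b be_b sub_bc] := be_ga c ga_c.
have /exists_inP[a al_a sub_ab] := al_be b be_b.
by apply/exists_inP; exists a; last exact: subset_trans sub_ab sub_bc.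
Qed.

Lemma precA_subset al be : isA be -> precA al be -> precA be al -> be \subset al.
Proof.
move=> be_A /forall_inP al_be /forall_inP be_al; apply/subsetP => b be_b.
have /exists_inP[a al_a sub_ab] := al_be b be_b.
have /exists_inP[b' be_b' sub_b'a] := be_al a al_a.
have eq_b'b : b' = b.
  by apply: (isA_antichain be_A) => //; exact: subset_trans sub_b'a sub_ab.
have eq_ab : a = b by apply/eqP; rewrite eqEsubset sub_ab -eq_b'b.
by rewrite -eq_ab.
Qed.

Lemma precA_anti : {in isA &, antisymmetric precA}.
Proof.
move=> al be al_A be_A /andP[al_be be_al].
by apply/eqP; rewrite eqEsubset !precA_subset.
Qed.

Lemma precN_refl : reflexive precN.
Proof. by move=> n; rewrite /precN !precA_refl. Qed.

Lemma precN_trans : transitive precN.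
Proof.
move=> [a2 b2] [a1 b1] [a3 b3] /andP[/= le_a12 le_b12] /andP[/= le_a23 le_b23].
by rewrite /precN (precA_trans le_a12 le_a23) (precA_trans le_b12 le_b23).
Qed.

Lemma precN_anti : {in isNode &, antisymmetric precN}.
Proof.
move=> [a1 b1] [a2 b2] /andP[/= a1_A b1_A] /andP[/= a2_A b2_A].
case/andP=> /andP[/= le_a12 le_b12] /andP[/= le_a21 le_b21].
by rewrite (precA_anti a1_A a2_A) ?le_a12 // (precA_anti b1_A b2_A) ?le_b12.
Qed.

Lemma compatible_eq_off_bot2 (R : realType) (Omega : finType) (P : Omega -> R)
    (V : eqType) (X Y : 'I_2 -> Omega -> V)
    (Red : seq (rvec Omega V) -> rvec Omega V -> R)
    (Icap Icap' : {set {set 'I_2}} -> {set {set 'I_2}} -> R) al be :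
  compatible P X Y Red Icap -> compatible P X Y Red Icap' ->
  isA al -> isA be -> (al, be) != (bot2, bot2) -> Icap al be = Icap' al be.
Proof.
move=> [_ red_X red_Y] [_ red_X' red_Y'] al_A be_A ne_bot.
case: (isA_cases al_A) => [al_bot | [a al_a]]; last first.
  by rewrite al_a in al_A *; rewrite red_Y // red_Y'.
case: (isA_cases be_A) => [be_bot | [b be_b]]; last first.
  by rewrite be_b in be_A *; rewrite red_X // red_X'.
by rewrite al_bot be_bot eqxx in ne_bot.
Qed.

Theorem proposition1 (R : realType) (Omega : finType) (P : Omega -> R)
  (V : eqType) (X Y : 'I_2 -> Omega -> V)
  (Red : seq (rvec Omega V) -> rvec Omega V -> R)
  (Icap Icap' Ipart Ipart' : {set {set 'I_2}} -> {set {set 'I_2}} -> R) :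
  (forall w, 0 <= P w) -> \sum_(w : Omega) P w = 1 ->
  compatible P X Y Red Icap -> monotone Icap ->
  compatible P X Y Red Icap' -> monotone Icap' ->
  atoms_of Icap Ipart -> atoms_of Icap' Ipart' ->
  Ipart bot2 bot2 = Ipart' bot2 bot2 ->
  forall al be, isA al -> isA be -> Ipart al be = Ipart' al be.
Proof.
move=> _ _ compat _ compat' _ atoms atoms' eq_bot al be al_A be_A.
have eq_atoms := eq_atoms_of_eq_cumulative_off (in1W precN_refl) precN_anti
  (in3W precN_trans) (f := fun n => Ipart n.1 n.2) (g := fun n => Ipart' n.1 n.2)
  (n0 := (bot2, bot2)) eq_bot.
apply: (eq_atoms _ (al, be)); last exact/andP.
move=> [a b] ab_node ne_bot; rewrite -atoms // -atoms' //.
case/andP: ab_node => a_A b_A.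
exact: compatible_eq_off_bot2 compat compat' a_A b_A ne_bot.
Qed.
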